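(* Let $G$ be a connected graph with $n\ge 2$ vertices and let $\varepsilon\ge 0$. If $G$ has at least $\varepsilon n$ bad vertices, then the graphic TSP cost of $G$ is at least $(1+\varepsilon)n-2$.
   Context: A vertex is bad if it has degree $1$, or it has degree $2$ and is an articulation point (a vertex whose removal increases the number of connected components). For a connected unweighted undirected graph $G=(V,E)$ with $n\ge 2$ vertices, the graphic TSP cost is $\min \sum_{i=1}^{n} d_G(v_i,v_{i+1})$ over cyclic orderings $(v_1,\dots,v_n)$ of $V$ ($v_{n+1}=v_1$), where $d_G$ is shortest-path distance. *)

From mathcomp Require Import all_boot all_order all_algebra.
From mathcomp Require Import fingroup perm.
Set Implicit Arguments. Unset Strict Implicit. Unset Printing Implicit Defensive.

(* A simple undirected graph: vertex set T (a finType), adjacency e : rel T,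
   assumed symmetric and irreflexive in the theorem statement. *)

Section Graph.
Variables (T : finType) (e : rel T).

Definition induced_rel (A : {set T}) : rel T :=
  [rel y z | [&& y \in A, z \in A & e y z]].

Definition ncomp (A : {set T}) : nat := n_comp (induced_rel A) (mem A).

Definition connected_graph : Prop := forall x y : T, connect e x y.

Definition degree (x : T) : nat := #|[set y | e x y]|.

Definition articulation (x : T) : bool :=
  ncomp [set: T] < ncomp [set~ x].

Definition bad (x : T) : bool :=
  (degree x == 1) || ((degree x == 2) && articulation x).

Definition bad_set : {set T} := [set x | bad x].

Definition walk_len (x y : T) (k : nat) : bool :=
  [exists p : k.-tuple T, path e x p && (last x p == y)].

(* shortest-path distance; in a connected graph some walk of length < #|T|
   exists, so this is the least such length *)
Definition dist (x y : T) : nat := find (walk_len x y) (iota 0 #|T|).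

Definition cycle_cost (s : seq T) : nat :=
  \sum_(p <- zip s (rot 1 s)) dist p.1 p.2.

Definition ordering (s : {perm T}) : seq T := [seq s x | x <- enum T].

Definition gtsp : nat :=
  \big[minn/cycle_cost (ordering 1)]_(s : {perm T}) cycle_cost (ordering s).

End Graph.

From mathcomp Require Import all_boot all_order all_algebra.
From mathcomp Require Import fingroup perm zify lra.
Set Implicit Arguments. Unset Strict Implicit. Unset Printing Implicit Defensive.

(* An optimal cyclic ordering, with each of its n steps replaced by a
   shortest walk, becomes a closed walk x0 :: w of length gtsp G through all
   vertices.  Each vertex v != x0 has a discovery step, the first step
   entering v, coming from its parent; these are n - 1 distinct steps.  At a
   bad vertex v (a leaf, or an articulation point of degree 2) every edge is
   a bridge, so the walk, which must come back to the parent's side, also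
   takes the step v -> parent v; such return steps are distinct for
   distinct v and are never discovery steps.  Hence the walk has at least
   (n - 1) + (#bad - 1) steps. *)

Lemma zip_rot1 (A : Type) (x : A) (s : seq A) :
  zip (x :: s) (rot 1 (x :: s)) = pairmap pair x (rcons s x).
Proof.
rewrite rot1_cons; elim: s x {2 4}x => [|y s IHs] x z //=.
by rewrite IHs.
Qed.

Lemma pairmap_enter (A : eqType) (S : pred A) (x : A) (p : seq A) :
  ~~ S x -> S (last x p) ->
  exists2 st, st \in pairmap pair x p & ~~ S st.1 && S st.2.
Proof.
elim: p x => [|y p IHp] x /= nSx Slast; first by rewrite Slast in nSx.
have [Sy | nSy] := boolP (S y); first by exists (x, y); rewrite ?mem_head ?nSx.
by have [st st_p st_enter] := IHp y nSy Slast; exists st; rewrite // inE st_p orbT.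
Qed.

Lemma closed_walk_enter (A : eqType) (S : pred A) (x0 y z : A) (w : seq A) :
  last x0 w = x0 -> y \in x0 :: w -> ~~ S y -> z \in x0 :: w -> S z ->
  exists2 st, st \in pairmap pair x0 w & ~~ S st.1 && S st.2.
Proof.
move=> closed y_w nSy z_w Sz.
have [Sx0 | nSx0] := boolP (S x0).
  have {}y_w : y \in w.
    by move: y_w; rewrite inE => /orP [/eqP y_x0 | //]; rewrite y_x0 Sx0 in nSy.
  case: (splitPr y_w) closed => p1 p2 closed; rewrite pairmap_cat.
  have [st st_p st_enter] : exists2 st, st \in pairmap pair y p2 & ~~ S st.1 && S st.2.
    by apply: pairmap_enter; move: closed; rewrite // last_cat /= => ->.
  by exists st; rewrite // mem_cat /= inE st_p !orbT.
have {}z_w : z \in w.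
  by move: z_w; rewrite inE => /orP [/eqP z_x0 | //]; rewrite -z_x0 Sz in nSx0.
case: (path.splitP z_w) => p1 p2; rewrite pairmap_cat.
have [st st_p st_enter] : exists2 st, st \in pairmap pair x0 (rcons p1 z) & ~~ S st.1 && S st.2.
  by apply: pairmap_enter; rewrite ?last_rcons.
by exists st; rewrite // mem_cat st_p.
Qed.

Lemma path_pairmap (A : eqType) (r : rel A) (x : A) (p : seq A) (st : A * A) :
  path r x p -> st \in pairmap pair x p -> r st.1 st.2.
Proof.
elim: p x => [|y p IHp] x //= /andP [rxy r_p]; rewrite inE.
by case/orP=> [/eqP -> // | st_p]; apply: IHp r_p st_p.
Qed.

Lemma card_disjoint_codes (T : finType) (A B : {set T}) (f g : T -> nat) (n : nat) :
  {in A &, injective f} -> {in B &, injective g} ->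
  {in A, forall x, f x < n} -> {in B, forall y, g y < n} ->
  {in A & B, forall x y, f x != g y} -> #|A| + #|B| <= n.
Proof.
move=> f_inj g_inj f_lt g_lt fg_disj.
set codes := [seq f x | x <- enum A] ++ [seq g y | y <- enum B].
have codes_uniq : uniq codes.
  rewrite cat_uniq !map_inj_in_uniq ?enum_uniq ?andbT; first last.
  - by move=> x y; rewrite !mem_enum => x_A y_A /f_inj; apply.
  - by move=> x y; rewrite !mem_enum => x_B y_B /g_inj; apply.
  apply/hasPn=> _ /mapP [y y_B ->]; apply/mapP=> [[x x_A /eqP]].
  by rewrite !mem_enum in x_A y_B; rewrite eq_sym (negbTE (fg_disj x y x_A y_B)).
have codes_sub : {subset codes <= iota 0 n}.
  move=> c; rewrite mem_cat mem_iota /= => /orP [] /mapP [x]; rewrite mem_enum.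
    by move=> /f_lt ? ->.
  by move=> /g_lt ? ->.
by have := uniq_leq_size codes_uniq codes_sub; rewrite size_cat !size_map size_iota -!cardE.
Qed.

Section Graph.
Variables (T : finType) (e : rel T).
Hypotheses (e_sym : symmetric e) (e_irr : irreflexive e) (conn : connected_graph e).

Lemma dist_walk (x y : T) :
  exists p, [/\ path e x p, last x p = y & size p = dist e x y].
Proof.
have has_walk : has (walk_len e x y) (iota 0 #|T|).
  have /connectP [p p_path ->] := conn x y.
  case: (shortenP p_path) => q q_path q_uniq _.
  apply/hasP; exists (size q); last first.
    by apply/existsP; exists (in_tuple q); rewrite /= q_path eqxx.
  rewrite mem_iota /= -ltnS.
  by have := max_card (mem (x :: q)); rewrite (card_uniqP q_uniq).
have dist_lt : dist e x y < #|T|.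
  by rewrite -[X in _ < X](size_iota 0 #|T|) -has_find.
have := nth_find 0 has_walk; rewrite nth_iota // add0n.
by case/existsP=> p /andP [p_path /eqP p_last]; exists p; rewrite size_tuple.
Qed.

Lemma walk_through (x : T) (L : seq T) :
  exists w, [/\ path e x w, last x w = last x L,
    size w = \sum_(st <- pairmap pair x L) dist e st.1 st.2 & {subset L <= x :: w}].
Proof.
elim: L x => [|y L IHL] x; first by exists [::]; rewrite big_nil.
have [p [p_path p_last p_size]] := dist_walk x y.
have [w [w_path w_last w_size w_sub]] := IHL y.
exists (p ++ w); split.
- by rewrite cat_path p_path p_last.
- by rewrite last_cat p_last w_last.
- by rewrite size_cat /= big_cons p_size w_size.
have y_pw : {subset y :: w <= x :: p ++ w}.
  move=> z; rewrite -cat_cons mem_cat -p_last inE => /orP [/eqP -> | z_w].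
    by rewrite mem_last.
  by rewrite z_w orbT.
move=> z; rewrite inE => /orP [/eqP -> | z_L]; apply: y_pw; first exact: mem_head.
exact: w_sub.
Qed.

Lemma closed_walk_of_ordering (L : seq T) (x : T) : x \in L ->
  exists x0 w, [/\ path e x0 w, last x0 w = x0,
    size w = cycle_cost e L & {subset L <= x0 :: w}].
Proof.
case: L => [// | x0 L] _; have [w [w_path w_last w_size w_sub]] := walk_through x0 (rcons L x0).
exists x0, w; split=> //; first by rewrite w_last last_rcons.
  by rewrite /cycle_cost zip_rot1.
move=> z; rewrite inE => /orP [/eqP -> | z_L]; first exact: mem_head.
by apply: w_sub; rewrite mem_rcons inE z_L orbT.
Qed.

Lemma mem_ordering (s : {perm T}) (z : T) : z \in ordering s.
Proof. by apply/mapP; exists (s^-1 z)%g; rewrite ?mem_enum ?permKV. Qed.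

Local Notation del v := (induced_rel e [set~ v]).

Lemma induced_connect_sym (A : {set T}) : connect_sym (induced_rel e A).
Proof. by apply: sym_connect_sym => y z; rewrite /induced_rel /= e_sym andbCA. Qed.

Lemma ncomp_le1 (A : {set T}) :
  {in A &, forall y z, connect (induced_rel e A) y z} -> ncomp e A <= 1.
Proof.
move=> A_conn; apply/card_le1_eqP=> r r' /andP [/eqP r_root r_A] /andP [/eqP r'_root r'_A].
by rewrite -r_root -r'_root; apply/eqP; rewrite root_connect ?A_conn //; apply: induced_connect_sym.
Qed.

Lemma ncomp_setT_gt0 (x : T) : 0 < ncomp e [set: T].
Proof.
apply/card_gt0P; exists (fingraph.root (induced_rel e [set: T]) x).
by rewrite !inE /= andbT; apply/roots_root/induced_connect_sym.
Qed.

Lemma reach_neighbor (v z : T) (p : seq T) : path e z p -> last z p = v -> z != v ->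
  exists2 q, e q v & connect (del v) z q.
Proof.
elim: p z => [|y p IHp] z /=; first by move=> _ -> /eqP.
case/andP=> e_zy y_path p_last z_v.
have [y_v | y_v] := eqVneq y v; first by exists z; rewrite -?y_v.
have [q e_qv y_q] := IHp y y_path p_last y_v; exists q => //.
by apply: connect_trans y_q; apply: connect1; rewrite /induced_rel /= !in_setC1 z_v y_v.
Qed.

Lemma del_connect_ne (v a z : T) : a != v -> connect (del v) a z -> z != v.
Proof.
move=> a_v /connectP [p p_path ->]; case/lastP: p p_path => [// | p' y].
rewrite rcons_path last_rcons => /andP [_].
by rewrite /induced_rel /= !in_setC1 => /and3P [].
Qed.

Lemma not_articulation (v : T) :
  {in [set y | e v y] &, forall a b, connect (del v) a b} -> ~~ articulation e v.
Proof.
move=> nbrs_conn; rewrite /articulation -leqNgt.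
apply: leq_trans (ncomp_setT_gt0 v); apply: ncomp_le1 => y z y_v z_v.
have [py py_path py_last] := connectP (conn y v).
have [pz pz_path pz_last] := connectP (conn z v).
rewrite !in_setC1 in y_v z_v.
have [qy e_qy y_qy] := reach_neighbor py_path (esym py_last) y_v.
have [qz e_qz z_qz] := reach_neighbor pz_path (esym pz_last) z_v.
apply: connect_trans y_qy (connect_trans (nbrs_conn qy qz _ _) _); rewrite ?inE 1?e_sym //.
by rewrite induced_connect_sym.
Qed.

(* At a bad vertex v, distinct neighbours lie in distinct components of
   G - v: for degree 1 there is only one neighbour, and for degree 2 two
   joined neighbours would make v a non-articulation point. *)
Lemma bad_separates (v u u' : T) :
  bad e v -> e v u -> e v u' -> connect (del v) u u' -> u' = u.
Proof.
move=> v_bad e_vu e_vu' u_u'; apply/eqP; apply: contraT => u'_u.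
have pair_sub : [set u; u'] \subset [set y | e v y].
  by apply/subsetP=> y; rewrite !inE => /orP [] /eqP ->.
have := subset_leq_card pair_sub; rewrite cards2 eq_sym u'_u.
move: v_bad; rewrite /bad /degree => /orP [/eqP -> // | /andP [/eqP deg2 art] _].
have nbrs : [set y | e v y] = [set u; u'].
  by apply/esym/eqP; rewrite eqEcard pair_sub cards2 deg2 eq_sym u'_u.
suff : ~~ articulation e v by rewrite art.
apply: not_articulation; rewrite nbrs => a b.
rewrite !inE => /orP [] /eqP -> /orP [] /eqP ->; rewrite ?connect0 //.
by rewrite induced_connect_sym.
Qed.

(* Consequently an edge vu at a bad vertex v is a bridge: the only edge
   entering the component S of u in G - v from outside is the step v -> u. *)
Lemma bad_bridge (v u a b : T) : bad e v -> e v u -> e a b ->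
  ~~ connect (del v) u a -> connect (del v) u b -> a = v /\ b = u.
Proof.
move=> v_bad e_vu e_ab u_a u_b.
have u_v : u != v by apply: contraTneq e_vu => ->; rewrite e_irr.
have b_v := del_connect_ne u_v u_b.
have a_v : a = v.
  apply/eqP; apply: contraNT u_a => a_v.
  by apply: connect_trans u_b (connect1 _); rewrite /induced_rel /= !in_setC1 a_v b_v e_sym.
by split=> //; apply: bad_separates u_b; rewrite // -a_v.
Qed.

Section ClosedWalk.
Variables (x0 : T) (w : seq T).
Hypotheses (w_path : path e x0 w) (w_closed : last x0 w = x0)
           (w_covers : forall z, z \in x0 :: w).

Local Notation steps := (pairmap pair x0 w).

(* Every v != x0 is first reached at step index v w, coming from its
   parent: the vertex the walk occupies just before that step. *)
Definition parent (v : T) : T := nth x0 (x0 :: w) (index v w).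

Lemma mem_walk (v : T) : v != x0 -> v \in w.
Proof. by move=> v_x0; have := w_covers v; rewrite inE (negbTE v_x0). Qed.

Lemma index_walk (v : T) : v != x0 -> index v (x0 :: w) = (index v w).+1.
Proof. by move=> v_x0; rewrite /= eq_sym (negbTE v_x0). Qed.

Lemma discovery_step (v : T) : v != x0 -> nth (x0, x0) steps (index v w) = (parent v, v).
Proof. by move=> v_x0; rewrite (nth_pairmap x0) ?nth_index ?index_mem ?mem_walk. Qed.

Lemma parent_edge (v : T) : v != x0 -> e (parent v) v.
Proof.
move=> v_x0; rewrite -[parent v]/(parent v, v).1 -[X in e _ X]/(parent v, v).2.
apply: path_pairmap w_path _; rewrite -discovery_step // mem_nth //.
by rewrite size_pairmap index_mem mem_walk.
Qed.

Lemma parent_first (v : T) : v != x0 -> index (parent v) (x0 :: w) <= index v w.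
Proof. by move=> v_x0; apply: index_nth; rewrite ltnS ltnW // index_mem mem_walk. Qed.

(* A bad vertex v != x0 is left through the bridge back to its parent. *)
Lemma return_step (v : T) : bad e v -> v != x0 -> (v, parent v) \in steps.
Proof.
move=> v_bad v_x0; set S := connect (del v) (parent v).
have parent_v : parent v != v.
  by apply: contraTneq (parent_edge v_x0) => ->; rewrite e_irr.
have nSv : ~~ S v by apply/negP => /(del_connect_ne parent_v); rewrite eqxx.
have [[a b] st_steps /andP [nSa Sb]] :=
  closed_walk_enter w_closed (w_covers v) nSv (w_covers (parent v)) (connect0 _ _).
have e_ab : e a b := path_pairmap w_path st_steps.
have e_v_parent : e v (parent v) by rewrite e_sym parent_edge.
by have [<- <-] := bad_bridge v_bad e_v_parent e_ab nSa Sb.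
Qed.

(* A return step is never a discovery step: if the step v -> parent v
   discovered u, then u = parent v was visited before v, while v = parent u
   was visited before u. *)
Lemma return_not_discovery (u v : T) : u != x0 -> v != x0 ->
  (v, parent v) \in steps -> index (v, parent v) steps != index u w.
Proof.
move=> u_x0 v_x0 ret; apply/negP => /eqP same.
have := nth_index (x0, x0) ret; rewrite same discovery_step // => -[pu_v u_pv].
have := parent_first u_x0; have := parent_first v_x0.
rewrite -u_pv pu_v !index_walk //; lia.
Qed.

(* Counting discovery steps (one per vertex other than x0) and return steps
   (one per bad vertex other than x0) bounds the length of the walk. *)
Lemma closed_walk_bound : #|T| + #|bad_set e| <= size w + 2.
Proof.
pose ret v := index (v, parent v) steps.
have ret_mem v : v \in bad_set e :\ x0 -> (v, parent v) \in steps.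
  by rewrite !inE => /andP [v_x0 v_bad]; apply: return_step.
have: #|[set~ x0]| + #|bad_set e :\ x0| <= size w.
  apply: (@card_disjoint_codes _ _ _ (index^~ w) ret).
  - move=> a b; rewrite !in_setC1 => a_x0 b_x0 same.
    by rewrite -(nth_index x0 (mem_walk a_x0)) same nth_index ?mem_walk.
  - move=> a b /ret_mem a_ret /ret_mem b_ret same.
    by have := nth_index (x0, x0) a_ret; rewrite [index _ _]same nth_index // => -[].
  - by move=> v; rewrite in_setC1 => v_x0; rewrite index_mem mem_walk.
  - by move=> v /ret_mem v_ret; rewrite -(size_pairmap pair x0) index_mem.
  move=> u v; rewrite in_setC1 => u_x0 v_ret; rewrite eq_sym return_not_discovery //.
    by move: v_ret; rewrite !inE => /andP [].
  exact: ret_mem.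
have := cardsD1 x0 (bad_set e); have : 0 < #|T| by apply/card_gt0P; exists x0.
rewrite cardsC1; case: (x0 \in bad_set e) => /=; lia.
Qed.
End ClosedWalk.

Lemma cycle_cost_bound (s : {perm T}) (z : T) :
  #|T| + #|bad_set e| <= cycle_cost e (ordering s) + 2.
Proof.
have [x0 [w [w_path w_closed <- w_sub]]] := closed_walk_of_ordering (mem_ordering s z).
exact: closed_walk_bound w_path w_closed (fun y => w_sub y (mem_ordering s y)).
Qed.

Lemma gtsp_bound (z : T) : #|T| + #|bad_set e| <= gtsp e + 2.
Proof.
apply: (big_ind (fun c => #|T| + #|bad_set e| <= c + 2)) => [|a b a_bound b_bound|s _].
- exact: cycle_cost_bound.
- by rewrite /minn; case: ifP.
exact: cycle_cost_bound.
Qed.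
End Graph.

Unset Implicit Arguments. Set Strict Implicit. Set Printing Implicit Defensive.
Import Order.TTheory GRing.Theory Num.Theory.
Local Open Scope ring_scope.

Theorem mainTheorem12 (R : realFieldType) (T : finType) (e : rel T)
    (e_sym : symmetric e) (e_irr : irreflexive e)
    (conn : connected_graph e) (n2 : (2 <= #|T|)%N)
    (eps : R) (eps0 : 0 <= eps)
    (hbad : eps * #|T|%:R <= #|bad_set e|%:R) :
  (1 + eps) * #|T|%:R - 2 <= (gtsp e)%:R.
Proof.
have /card_gt0P [z _] : (0 < #|T|)%N by apply: leq_trans n2.
have : (#|T| + #|bad_set e|)%:R <= (gtsp e + 2)%:R :> R.
  by rewrite ler_nat; apply: gtsp_bound.
rewrite !natrD; lra.
Qed.
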